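(* Let $\varphi\neq0$ and $\phi$ be real numbers and $$M_A=\begin{pmatrix} i\cosh\varphi & e^{i\phi}\sinh\varphi\\ e^{-i\phi}\sinh\varphi & -i\cosh\varphi\end{pmatrix},\qquad M_B=\begin{pmatrix} i&0\\0&-i\end{pmatrix}.$$ Let $M_1,M_2,\dots$ be independent random matrices, each equal to $M_A$ or $M_B$ with probability $1/2$, and write $\Pi_n=M_1\cdots M_n=\begin{pmatrix}\alpha_n&\beta_n\\ \beta_n^*&\alpha_n^*\end{pmatrix}$. Then for every integer $k\ge1$, $$\mathbb{E}\left(|\alpha_{2k-1}|^2+|\beta_{2k-1}|^2\right)=\mathbb{E}\left(|\alpha_{2k}|^2+|\beta_{2k}|^2\right)=(\cosh\varphi)^{2k},$$ and consequently $\lim_{n\to\infty}\frac{1}{2n}\log\mathbb{E}\left(|\alpha_n|^2+|\beta_n|^2\right)=\frac12\log\cosh\varphi>0$.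
   Context: $\mathbb{E}$ denotes expectation over the random choices of $M_1,\dots,M_n$. The matrices $M_A,M_B$ lie in $\operatorname{SU}(1,1)$ and are traceless (reflection matrices). *)

From HB Require Import structures.
From mathcomp Require Import all_boot all_order all_algebra.
From mathcomp Require Import all_classical all_reals all_analysis.
From mathcomp Require Import complex.
Set Implicit Arguments. Unset Strict Implicit. Unset Printing Implicit Defensive.
Import Order.TTheory GRing.Theory Num.Theory.
Local Open Scope ring_scope.

Definition coshr {R : realType} (x : R) : R := (expR x + expR (- x)) / 2.
Definition sinhr {R : realType} (x : R) : R := (expR x - expR (- x)) / 2.

Definition cexpi {R : realType} (phi : R) : R[i] := (cos phi +i* sin phi)%C.

Definition MA {R : realType} (vphi phi : R) : 'M[R[i]]_2 :=
  \matrix_(i < 2, j < 2)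
    if (i == 0) && (j == 0) then (0 +i* coshr vphi)%C
    else if (i == 0) && (j == 1) then (cexpi phi * (sinhr vphi)%:C)%C
    else if (i == 1) && (j == 0) then (cexpi (- phi) * (sinhr vphi)%:C)%C
    else (0 +i* (- coshr vphi))%C.

Definition MB {R : realType} : 'M[R[i]]_2 :=
  \matrix_(i < 2, j < 2)
    if (i == 0) && (j == 0) then (0 +i* 1)%C
    else if (i == 1) && (j == 1) then (0 +i* (-1))%C
    else 0.

Definition Pi {R : realType} (vphi phi : R) (n : nat) (s : {ffun 'I_n -> bool})
  : 'M[R[i]]_2 := \prod_(k < n) (if s k then MA vphi phi else MB).

Definition normAB {R : realType} (P : 'M[R[i]]_2) : R :=
  ComplexField.Normc.normc (P 0 0) ^+ 2 + ComplexField.Normc.normc (P 0 1) ^+ 2.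

Definition expect_n {R : realType} (vphi phi : R) (n : nat) : R :=
  (2 ^+ n)^-1 * \sum_(s : {ffun 'I_n -> bool}) normAB (Pi vphi phi s).

(* Write beta' = e^{-i phi} beta for the rotated off-diagonal entry of a
   product, so that |alpha|^2 + |beta|^2 = |alpha|^2 + |beta'|^2.  Right
   multiplication by M_B multiplies alpha and beta' by i and -i, so it keeps
   N = |alpha|^2 + |beta'|^2 and negates C = 2 Im (alpha conj beta'); right
   multiplication by M_A acts on (alpha, beta') by the matrix
   [[i cosh, sinh], [sinh, -i cosh]] and mixes N and C linearly.  Averaging
   over the last factor, the expectations (E N_n, E C_n) evolve by the fixed
   matrix K = [[cosh^2, -cosh sinh], [cosh sinh, -cosh^2]], whose square is
   cosh^2 (cosh^2 - sinh^2) I = cosh^2 I.  Starting from (E N_0, E C_0) = (1, 0)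
   this gives E N_n = cosh^(2 ceil(n/2)), hence (2n)^-1 log E N_n tends to
   (log cosh)/2, which is positive since cosh phi > 1 for phi <> 0. *)

From HB Require Import structures.
From mathcomp Require Import all_boot all_order all_algebra.
From mathcomp Require Import all_classical all_reals all_analysis.
From mathcomp Require Import complex.
From mathcomp Require Import ring lra.
Import Order.TTheory GRing.Theory Num.Theory.
Import numFieldNormedType.Exports.
Import ComplexField.Normc.
Local Open Scope ring_scope.
Local Open Scope classical_set_scope.

Lemma normc_sqrE (R : rcfType) (z : R[i]) :
  normc z ^+ 2 = complex.Re z ^+ 2 + complex.Im z ^+ 2.
Proof. by case: z => a b /=; rewrite sqr_sqrtr // addr_ge0 // sqr_ge0. Qed.

Lemma normc_cexpi (R : realType) (x : R) : normc (cexpi x) = 1.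
Proof. by rewrite /= cos2Dsin2 sqrtr1. Qed.

Lemma mul_cexpiN (R : realType) (x : R) : cexpi (- x) * cexpi x = 1.
Proof.
apply/eqP; rewrite eq_complex /= cosN sinN -(cos2Dsin2 x).
by apply/andP; split; apply/eqP; ring.
Qed.

Lemma mulmx2E (R : pzRingType) (A B : 'M[R]_2) i j :
  (A * B) i j = A i 0 * B 0 j + A i 1 * B 1 j.
Proof.
rewrite [LHS]mxE big_ord_recr big_ord1 /=.
by congr (A i _ * B _ j + A i _ * B _ j); apply: val_inj.
Qed.

Lemma sinhr_sqr (R : realType) (x : R) : sinhr x ^+ 2 = coshr x ^+ 2 - 1.
Proof.
have -> : 1 = expR x * expR (- x) :> R by rewrite -expRD subrr expR0.
by rewrite /coshr /sinhr; field.
Qed.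

Lemma coshr_gt1 (R : realType) (x : R) : x != 0 -> 1 < coshr x.
Proof.
move=> x_neq0; rewrite /coshr.
have := expR_gt1Dx x_neq0.
have := expR_gt1Dx (x := - x); rewrite oppr_eq0 => /(_ x_neq0).
lra.
Qed.

Definition extend {n} (s : {ffun 'I_n -> bool}) (b : bool) : {ffun 'I_n.+1 -> bool} :=
  [ffun i => if unlift ord_max i is Some j then s j else b].

Lemma lift_ord_max n (j : 'I_n) : lift ord_max j = widen_ord (leqnSn n) j.
Proof. by apply: val_inj; rewrite /= /bump leqNgt ltn_ord. Qed.

Lemma sum_extend (V : nmodType) n (G : {ffun 'I_n.+1 -> bool} -> V) :
  \sum_t G t = \sum_(s : {ffun 'I_n -> bool}) (G (extend s true) + G (extend s false)).
Proof.
rewrite (reindex (fun p : {ffun 'I_n -> bool} * bool => extend p.1 p.2)) /=.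
  rewrite -(pair_bigA _ (fun s b => G (extend s b))) /=.
  by apply: eq_bigr => s _; rewrite big_bool.
exists (fun t => ([ffun j => t (widen_ord (leqnSn n) j)], t ord_max)).
  move=> [s b] _ /=; congr (_, _); last by rewrite ffunE unlift_none.
  by apply/ffunP => j; rewrite !ffunE -lift_ord_max liftK.
move=> t _; apply/ffunP => i; rewrite ffunE.
by case: unliftP => [j ->|->]; rewrite ?ffunE ?lift_ord_max.
Qed.

Lemma Pi_extend (R : realType) (vphi phi : R) n (s : {ffun 'I_n -> bool}) b :
  Pi vphi phi (extend s b) = Pi vphi phi s * (if b then MA vphi phi else MB).
Proof.
rewrite /Pi big_ord_recr /= ffunE unlift_none; congr (_ * _).
by apply: eq_bigr => k _; rewrite ffunE -lift_ord_max liftK.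
Qed.

Section Mean.
Context {R : fieldType}.

Definition mean {n} (F : {ffun 'I_n -> bool} -> R) : R := (2 ^+ n)^-1 * \sum_s F s.

Lemma mean0 (F : {ffun 'I_0 -> bool} -> R) : mean F = F [ffun => true].
Proof.
rewrite /mean expr0 invr1 mul1r (big_pred1 [ffun => true]) // => s /=.
by apply/esym/eqP/ffunP => -[].
Qed.

Lemma meanS n (F : {ffun 'I_n.+1 -> bool} -> R) :
  mean F = mean (fun s => (F (extend s true) + F (extend s false)) / 2).
Proof. by rewrite /mean sum_extend -mulr_suml exprS invfM; ring. Qed.

Lemma mean_lin n (a b : R) (F G : {ffun 'I_n -> bool} -> R) :
  mean (fun s => a * F s - b * G s) = a * mean F - b * mean G.
Proof. by rewrite /mean sumrB -!mulr_sumr; ring. Qed.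

End Mean.

Section Transfer.
Variables (R : realType) (vphi phi : R).
Local Notation ch := (coshr vphi).
Local Notation sh := (sinhr vphi).
Implicit Types P : 'M[R[i]]_2.

Definition beta_rot P : R[i] := cexpi (- phi) * P 0 1.

Definition cross P : R := 2 * complex.Im (P 0 0 * (beta_rot P)^*)%C.

Lemma normAB_rot P : normAB P = normc (P 0 0) ^+ 2 + normc (beta_rot P) ^+ 2.
Proof. by rewrite /normAB /beta_rot normcM normc_cexpi mul1r. Qed.

Lemma alpha_mulMA P :
  (P * MA vphi phi) 0 0 = (0 +i* ch)%C * P 0 0 + (sh%:C)%C * beta_rot P.
Proof. by rewrite mulmx2E !mxE /= /beta_rot mulrC; congr (_ + _); ring. Qed.

Lemma beta_rot_mulMA P :
  beta_rot (P * MA vphi phi) = (sh%:C)%C * P 0 0 - (0 +i* ch)%C * beta_rot P.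
Proof.
rewrite /beta_rot mulmx2E !mxE /= mulrDr; congr (_ + _).
  transitivity (cexpi (- phi) * cexpi phi * ((sh%:C)%C * P 0 0)); first by ring.
  by rewrite mul_cexpiN mul1r.
have -> : (0 +i* (- ch)%R)%C = - (0 +i* ch)%C :> R[i].
  by apply/eqP; rewrite eq_complex /= oppr0 !eqxx.
ring.
Qed.

Lemma alpha_mulMB P : (P * MB) 0 0 = (0 +i* 1)%C * P 0 0.
Proof. by rewrite mulmx2E !mxE /= mulr0 addr0 mulrC. Qed.

Lemma beta_rot_mulMB P : beta_rot (P * MB) = (0 +i* -1)%C * beta_rot P.
Proof. by rewrite /beta_rot mulmx2E !mxE /= mulr0 add0r; ring. Qed.

Lemma normAB_mulMA P :
  normAB (P * MA vphi phi) = (ch ^+ 2 + sh ^+ 2) * normAB P - 2 * ch * sh * cross P.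
Proof.
rewrite !normAB_rot /cross beta_rot_mulMA alpha_mulMA !normc_sqrE.
by case: (P 0 0) => a b; case: (beta_rot P) => c d /=; ring.
Qed.

Lemma cross_mulMA P :
  cross (P * MA vphi phi) = 2 * ch * sh * normAB P - (ch ^+ 2 + sh ^+ 2) * cross P.
Proof.
rewrite normAB_rot /cross beta_rot_mulMA alpha_mulMA !normc_sqrE.
by case: (P 0 0) => a b; case: (beta_rot P) => c d /=; ring.
Qed.

Lemma normAB_mulMB P : normAB (P * MB) = normAB P.
Proof.
rewrite !normAB_rot beta_rot_mulMB alpha_mulMB !normc_sqrE.
by case: (P 0 0) => a b; case: (beta_rot P) => c d /=; ring.
Qed.

Lemma cross_mulMB P : cross (P * MB) = - cross P.
Proof.
rewrite /cross beta_rot_mulMB alpha_mulMB.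
by case: (P 0 0) => a b; case: (beta_rot P) => c d /=; ring.
Qed.

Definition expect_cross n :=
  mean (fun s : {ffun 'I_n -> bool} => cross (Pi vphi phi s)).

Lemma expect_nE n :
  expect_n vphi phi n = mean (fun s : {ffun 'I_n -> bool} => normAB (Pi vphi phi s)).
Proof. by []. Qed.

Lemma expect_n0 : expect_n vphi phi 0 = 1.
Proof. by rewrite expect_nE mean0 /Pi big_ord0 /normAB !normc_sqrE !mxE /=; ring. Qed.

Lemma expect_cross0 : expect_cross 0 = 0.
Proof. by rewrite /expect_cross mean0 /Pi big_ord0 /cross /beta_rot !mxE /=; ring. Qed.

Lemma expect_nS n :
  expect_n vphi phi n.+1 = ch ^+ 2 * expect_n vphi phi n - ch * sh * expect_cross n.
Proof.
rewrite !expect_nE meanS -mean_lin; congr mean; apply/funext => s.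
by rewrite !Pi_extend normAB_mulMA normAB_mulMB sinhr_sqr; field.
Qed.

Lemma expect_crossS n :
  expect_cross n.+1 = ch * sh * expect_n vphi phi n - ch ^+ 2 * expect_cross n.
Proof.
rewrite /expect_cross expect_nE meanS -mean_lin; congr mean; apply/funext => s.
by rewrite !Pi_extend cross_mulMA cross_mulMB sinhr_sqr; field.
Qed.

Lemma expect_nSS n : expect_n vphi phi n.+2 = ch ^+ 2 * expect_n vphi phi n.
Proof.
rewrite !expect_nS expect_crossS.
transitivity (ch ^+ 2 * (ch ^+ 2 - sh ^+ 2) * expect_n vphi phi n); first by ring.
by rewrite sinhr_sqr; ring.
Qed.

Lemma expect_n_uphalf n : expect_n vphi phi n = ch ^+ (2 * uphalf n).
Proof.
elim/ltn_ind: n => -[|[|n]] IHn.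
- by rewrite expect_n0.
- by rewrite expect_nS expect_n0 expect_cross0 mulr1 mulr0 subr0.
- by rewrite expect_nSS IHn //= mulnS exprD.
Qed.

End Transfer.

Lemma uphalf_div_bounds (R : realFieldType) n : (0 < n)%N ->
  (2^-1 : R) <= (uphalf n)%:R / n%:R <= 2^-1 + (harmonic n : R).
Proof.
move=> n_gt0; have n_ge1 : 1 <= n%:R :> R by rewrite ler1n.
have uphalf2 : 2 * (uphalf n)%:R = (odd n)%:R + n%:R :> R.
  by rewrite -natrM mul2n uphalfK natrD.
have odd_le1 : (odd n)%:R <= 1 :> R by case: odd.
have odd_ge0 : 0 <= (odd n)%:R :> R := ler0n _ _.
apply/andP; split; first by rewrite ler_pdivlMr ?ltr0n //; lra.
rewrite ler_pdivrMr ?ltr0n //=.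
have harmonicE : n.+1%:R^-1 * (n%:R + 1) = 1 :> R by rewrite -natr1 mulVf.
have : 0 <= (n%:R - 1) * n.+1%:R^-1 :> R.
  by rewrite mulr_ge0 ?subr_ge0 // invr_ge0.
move: harmonicE; set h := n.+1%:R^-1; set x := n%:R; set u := (uphalf n)%:R.
nra.
Qed.

Lemma cvg_uphalf_div (R : archiRealFieldType) :
  ((uphalf n)%:R / n%:R : R) @[n --> \oo] --> (2^-1 : R).
Proof.
have harmonic_cvg : (2^-1 + harmonic n : R) @[n --> \oo] --> (2^-1 : R).
  by rewrite -[X in _ --> X]addr0; apply: cvgD; [exact: cvg_cst | exact: cvg_harmonic].
apply: (squeeze_cvgr _ (cvg_cst _) harmonic_cvg).
by exists 1%N => // n; apply: uphalf_div_bounds.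
Qed.

Theorem mainTheorem5 (R : realType) (vphi phi : R) (hvphi : vphi != 0) :
  (forall k : nat, (1 <= k)%N ->
     expect_n vphi phi (2 * k).-1 = coshr vphi ^+ (2 * k) /\
     expect_n vphi phi (2 * k) = coshr vphi ^+ (2 * k)) /\
  (((2 * n%:R)^-1 * ln (expect_n vphi phi n) : R) @[n --> \oo]
     --> (2^-1 * ln (coshr vphi) : R))%classic /\
  0 < 2^-1 * ln (coshr vphi).
Proof.
have ch_gt1 : 1 < coshr vphi by exact: coshr_gt1.
have ch_gt0 : 0 < coshr vphi by lra.
split; [|split].
- case=> [//|k] _; rewrite !expect_n_uphalf !mul2n uphalf_double.
  by rewrite doubleS /= doubleK doubleS.
- have logE n : (2 * n%:R)^-1 * ln (expect_n vphi phi n) =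
                (uphalf n)%:R / n%:R * ln (coshr vphi) :> R.
    rewrite expect_n_uphalf lnXn // -[ln _ *+ _]mulr_natr natrM invfM.
    transitivity (2^-1 * 2 * ((uphalf n)%:R / n%:R * ln (coshr vphi))); first by ring.
    by rewrite mulVf ?mul1r.
  by rewrite (funext logE); apply: cvgMr_tmp; exact: cvg_uphalf_div.
- by apply: mulr_gt0; [rewrite invr_gt0 | exact: ln_gt0].
Qed.
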